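(* For every detection predicate $\psi:\mathbb{N}^{\Sigma}\to\{0,1\}$ there exists a leaderless CRD that haltingly decides $\psi$ (under a weakly fair scheduler) whose halting runtime is $O(\log n)$. Moreover, the CRD is designed so that all molecules in the halting configuration are voters.
   Context: Detection predicate: for $\mathbf{x}\in\mathbb{N}^{\Sigma}$ let $\mathbf{x}_\downarrow\in\{0,1\}^{\Sigma}$ with $\mathbf{x}_\downarrow(A)=1$ iff $\mathbf{x}(A)>0$; $\psi$ is a detection predicate if $\psi(\mathbf{x})=\psi(\mathbf{x}_\downarrow)$ for all $\mathbf{x}$. CRN model: $\Pi=(\mathcal{S},\mathcal{R})$, finite species set, finite reaction set $\mathcal{R}\subset\mathbb{N}^{\mathcal{S}}\times\mathbb{N}^{\mathcal{S}}$; reactions $(\mathbf{r},\mathbf{p})$ with $\|\mathbf{r}\|_1\in\{1,2\}$, $\|\mathbf{r}\|_1\le\|\mathbf{p}\|_1$; every $\mathbf{r}$ with $1\le\|\mathbf{r}\|_1\le2$ has a nonempty set $\mathcal{R}(\mathbf{r})$ of reactions; void reactions ($\mathbf{r}=\mathbf{p}$) alone in their $\mathcal{R}(\mathbf{r})$; $\operatorname{NV}(\mathcal{R})$ non-void; finite density. Configurations $\mathbf{c}\in\mathbb{N}^{\mathcal{S}}$, $\|\mathbf{c}\|_1\ge1$; applicability $\mathbf{r}\le\mathbf{c}$, result $\mathbf{c}-\mathbf{r}+\mathbf{p}$; reachability $\stackrel{*}{\rightharpoonup}$; $\mathrm{halt}(Z)=\{\mathbf{c}\in Z:\mathbf{c}\stackrel{*}{\rightharpoonup}\mathbf{c}'\Rightarrow\mathbf{c}'=\mathbf{c}\}$.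 Weakly fair execution $\langle\mathbf{c}^t,\alpha^t\rangle$: every reaction applicable at step $t$ is later scheduled or becomes inapplicable. Halts into $Z$ at the first $t$ with $\mathbf{c}^t\in\mathrm{halt}(Z)$. CRD: input species $\Sigma\subset\mathcal{S}$, disjoint voters $\Upsilon_0,\Upsilon_1$, fuel $F\in\mathcal{S}\setminus\Sigma$, context $\mathbf{k}$ (leaderless: $\mathbf{k}=\mathbf{0}$); valid initial configurations agree with $\mathbf{k}$ off $\Sigma\cup\{F\}$ and have $\mathbf{c}^0(F)\ge1$ (arbitrary fuel count); $\mathcal{D}_v=\{\mathbf{c}:\mathbf{c}(\Upsilon_v)>0,\mathbf{c}(\Upsilon_{1-v})=0\}$; haltingly decides $\psi$ if for every $\mathbf{x}$, every weakly fair execution from every valid $\mathbf{c}^0$ with $\mathbf{c}^0|_\Sigma=\mathbf{x}$ halts into $\mathcal{D}_{\psi(\mathbf{x})}$. Runtime: stochastic scheduler with volume $\varphi=\Theta(n)$, $n=\|\mathbf{c}^0\|_1$; propensity $\pi_{\mathbf{c}}(\alpha)=\mathbf{c}(A)/|\mathcal{R}(\mathbf{r})|$ ($\mathbf{r}=A$), $\frac1\varphi\binom{\mathbf{c}(A)}2/|\mathcal{R}(\mathbf{r})|$ ($\mathbf{r}=2A$), $\frac1\varphi\mathbf{c}(A)\mathbf{c}(B)/|\mathcal{R}(\mathbf{r})|$ ($\mathbf{r}=A+B$); step time span $1/\pi_{\mathbf{c}}(\mathcal{R})$. $\tau(\eta,t,Q)$ = least $s>t$ with $\alpha^{s-1}\in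 Q$ or every reaction of $Q$ inapplicable at some step in $[t,s]$. Runtime policy $\varrho(\mathbf{c})\subseteq\operatorname{NV}(\mathcal{R})$; skipping policy $\sigma(t)\ge t$; rounds $t(0)=0$, $t_e(i)=\sigma(t(i))$, $\mathbf{e}^i=\mathbf{c}^{t_e(i)}$, $t(i+1)=\tau(\eta,t_e(i),\varrho(\mathbf{e}^i))$; $\operatorname{TC}^{\varrho}(\mathbf{c})$ = expected total time span of the steps before $\tau(\eta_r,0,\varrho(\mathbf{c}))$ of a stochastic execution $\eta_r$ from $\mathbf{c}$; $\operatorname{RT}_{\mathrm{halt}}^{\varrho,\sigma}(\eta)=\sum_{i<i^*}\operatorname{TC}^{\varrho}(\mathbf{e}^i)$ with $i^*=\min\{i:t(i)\ge t^*\}$, $t^*$ the halting step; halting runtime $\operatorname{RT}_{\mathrm{halt}}^{\Pi}(n)=\min_\varrho\max_{\eta,\sigma}\operatorname{RT}_{\mathrm{halt}}^{\varrho,\sigma}(\eta)$ over weakly fair executions from valid initial configurations of molecular count $n$ and all skipping policies. *)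

From HB Require Import structures.
From mathcomp Require Import all_boot all_order all_algebra.
From mathcomp Require Import boolp classical_sets reals constructive_ereal ereal exp.
From mathcomp Require Import Rstruct Rstruct_topology.
From Stdlib Require Import ClassicalEpsilon.

Set Implicit Arguments.
Unset Strict Implicit.
Unset Printing Implicit Defensive.

Import Order.TTheory GRing.Theory Num.Theory.

Notation real := Rdefinitions.R.

Definition vec (S : finType) := {ffun S -> nat}.
Definition rxn (S : finType) := (vec S * vec S)%type.

Definition msize (S : finType) (c : vec S) : nat := (\sum_(X : S) c X)%N.

Definition cnt (S : finType) (Y : {set S}) (c : vec S) : nat :=
  (\sum_(X in Y) c X)%N.

(* A CRN is given by its (finite) reaction set, listed as a sequence.
   Reactions are referred to by their index in this list. *)
Definition rx (S : finType) (Rs : seq (rxn S)) (j : 'I_(size Rs)) : rxn S :=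
  tnth (in_tuple Rs) j.

Definition applicable (S : finType) (a : rxn S) (c : vec S) : bool :=
  [forall X, a.1 X <= c X].

Definition apply_rxn (S : finType) (a : rxn S) (c : vec S) : vec S :=
  [ffun X => c X - a.1 X + a.2 X].

Definition is_void (S : finType) (a : rxn S) : bool := a.1 == a.2.

Definition step (S : finType) (Rs : seq (rxn S)) (c c' : vec S) : Prop :=
  exists2 a, a \in Rs & applicable a c /\ c' = apply_rxn a c.

Inductive reach (S : finType) (Rs : seq (rxn S)) : vec S -> vec S -> Prop :=
  | reach_refl c : reach Rs c c
  | reach_step c c' c'' : step Rs c c' -> reach Rs c' c'' -> reach Rs c c''.

(* c \in halt(Z) is (c \in Z /\ halted Rs c) *)
Definition halted (S : finType) (Rs : seq (rxn S)) (c : vec S) : Prop :=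
  forall c', reach Rs c c' -> c' = c.

Definition finite_density (S : finType) (Rs : seq (rxn S)) : Prop :=
  exists d : nat, forall c c', reach Rs c c' -> msize c' <= d * msize c.

Definition wf_CRN (S : finType) (Rs : seq (rxn S)) : Prop :=
  [/\ uniq Rs,
      (forall a, a \in Rs -> (1 <= msize a.1 <= 2) && (msize a.1 <= msize a.2)),
      (forall r : vec S, 1 <= msize r <= 2 -> exists p, (r, p) \in Rs),
      (forall r p, (r, r) \in Rs -> (r, p) \in Rs -> p = r)
    & finite_density Rs].

Definition is_exec (S : finType) (Rs : seq (rxn S)) (c0 : vec S)
    (cs : nat -> vec S) (als : nat -> 'I_(size Rs)) : Prop :=
  cs 0%N = c0 /\
  forall t, applicable (rx (als t)) (cs t) /\ cs t.+1 = apply_rxn (rx (als t)) (cs t).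

Definition weakly_fair (S : finType) (Rs : seq (rxn S))
    (cs : nat -> vec S) (als : nat -> 'I_(size Rs)) : Prop :=
  forall t (a : 'I_(size Rs)), applicable (rx a) (cs t) ->
    exists2 s, (t <= s)%N & (als s = a \/ ~~ applicable (rx a) (cs s)).

(* least natural number satisfying P (meaningful when one exists) *)
Definition least (P : nat -> Prop) : nat :=
  epsilon (inhabits 0%N) (fun n => P n /\ forall m, P m -> (n <= m)%N).

(* The schedule is given as an option-valued function so that it can be
   used both for infinite executions and for finite prefixes. *)
Definition tau_cond (S : finType) (Rs : seq (rxn S)) (cs : nat -> vec S)
    (als : nat -> option 'I_(size Rs)) (t : nat) (Q : {set 'I_(size Rs)})
    (s : nat) : Prop :=
  (t < s)%N /\
  ((exists2 a, als s.-1 = Some a & a \in Q) \/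
   (forall a, a \in Q -> exists2 u, (t <= u <= s)%N & ~~ applicable (rx a) (cs u))).

Definition tau (S : finType) (Rs : seq (rxn S)) (cs : nat -> vec S)
    (als : nat -> 'I_(size Rs)) (t : nat) (Q : {set 'I_(size Rs)}) : nat :=
  least (tau_cond cs (fun u => Some (als u)) t Q).

(* propensity of reaction j in configuration c with volume v:
   for r = A : c(A)/|R(r)| ; r = 2A : (1/v) binom(c(A),2)/|R(r)| ;
   r = A+B : (1/v) c(A)c(B)/|R(r)| (uniformly: prod_X binom(c X, r X)). *)
Definition propensity (S : finType) (Rs : seq (rxn S)) (v : real) (c : vec S)
    (j : 'I_(size Rs)) : real :=
  let r := (rx j).1 in
  ((\prod_(X : S) ('C(c X, r X))%:R) / (count (fun b : rxn S => b.1 == r) Rs)%:R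
    / (if msize r == 2 then v else 1))%R.

Definition tot_propensity (S : finType) (Rs : seq (rxn S)) (v : real) (c : vec S) : real :=
  (\sum_(j < size Rs) propensity v c j)%R.

Definition cfg_at (S : finType) (Rs : seq (rxn S)) (c : vec S)
    (l : seq 'I_(size Rs)) (u : nat) : vec S :=
  foldl (fun c' a => apply_rxn (rx a) c') c (take u l).

Fixpoint path_prob (S : finType) (Rs : seq (rxn S)) (v : real) (c : vec S)
    (l : seq 'I_(size Rs)) : real :=
  match l with
  | [::] => 1%R
  | a :: l' => (propensity v c a / tot_propensity Rs v c * path_prob v (apply_rxn (rx a) c) l')%R
  end.

(* TC^rho(c): expected total time span (step s at configuration c^s has
   time span 1/pi_{c^s}(R)) of the steps s < tau(eta_r, 0, rho(c)) of a
   stochastic execution eta_r from c. Computed as the supremum of the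
   partial sums over the steps s < N, each step summed over all
   schedule prefixes of length s. *)
Definition TC (S : finType) (Rs : seq (rxn S)) (v : real)
    (rho : vec S -> {set 'I_(size Rs)}) (c : vec S) : \bar real :=
  ereal_sup [set ((\sum_(s < N) \sum_(w : s.-tuple 'I_(size Rs))
       (if `[< forall s', (s' <= s)%N ->
               ~ tau_cond (cfg_at c w) (onth w) 0%N (rho c) s' >]
        then path_prob v c w / tot_propensity Rs v (cfg_at c w s)
        else 0))%R)%:E | N in [set: nat]].

Definition runtime_policy (S : finType) (Rs : seq (rxn S))
    (rho : vec S -> {set 'I_(size Rs)}) : Prop :=
  forall c a, a \in rho c -> ~~ is_void (rx a).

Definition skipping_policy (sigma : nat -> nat) : Prop :=
  forall t, (t <= sigma t)%N.

Fixpoint round_t (S : finType) (Rs : seq (rxn S))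
    (rho : vec S -> {set 'I_(size Rs)}) (sigma : nat -> nat)
    (cs : nat -> vec S) (als : nat -> 'I_(size Rs)) (i : nat) : nat :=
  match i with
  | 0 => 0%N
  | i'.+1 => let te := sigma (round_t rho sigma cs als i') in
             tau cs als te (rho (cs te))
  end.

Definition halting_step (S : finType) (Rs : seq (rxn S)) (cs : nat -> vec S) : nat :=
  least (fun t => halted Rs (cs t)).

Definition RT_exec (S : finType) (Rs : seq (rxn S)) (v : real)
    (rho : vec S -> {set 'I_(size Rs)}) (sigma : nat -> nat)
    (cs : nat -> vec S) (als : nat -> 'I_(size Rs)) : \bar real :=
  let istar := least (fun i => (halting_step Rs cs <= round_t rho sigma cs als i)%N) in
  (\sum_(i < istar) TC v rho (cs (sigma (round_t rho sigma cs als i))))%E.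

(* Input species are the image of the injection iota : Sig -> S; fuel F.
   Leaderless (context 0): valid initial configurations vanish outside
   Sigma and F, and contain at least one F. *)
Definition valid_init (Sig S : finType) (iota : Sig -> S) (F : S) (c0 : vec S) : Prop :=
  (forall X, (forall s, X != iota s) -> X != F -> c0 X = 0%N) /\ (0 < c0 F)%N.

Definition input_of (Sig S : finType) (iota : Sig -> S) (c0 : vec S) : {ffun Sig -> nat} :=
  [ffun s => c0 (iota s)].

Definition in_D (S : finType) (Y0 Y1 : {set S}) (b : bool) (c : vec S) : bool :=
  if b then (0 < cnt Y1 c)%N && (cnt Y0 c == 0%N)
  else (0 < cnt Y0 c)%N && (cnt Y1 c == 0%N).

Definition haltingly_decides (Sig S : finType) (Rs : seq (rxn S)) (iota : Sig -> S)
    (F : S) (Y0 Y1 : {set S}) (psi : {ffun Sig -> nat} -> bool) : Prop :=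
  forall c0 cs (als : nat -> 'I_(size Rs)), valid_init iota F c0 -> is_exec c0 cs als -> weakly_fair cs als ->
    exists t, in_D Y0 Y1 (psi (input_of iota c0)) (cs t) /\ halted Rs (cs t).

Definition halts_with_only_voters (Sig S : finType) (Rs : seq (rxn S)) (iota : Sig -> S)
    (F : S) (Y0 Y1 : {set S}) : Prop :=
  forall c0 cs (als : nat -> 'I_(size Rs)), valid_init iota F c0 -> is_exec c0 cs als -> weakly_fair cs als ->
    forall X, (0 < cs (halting_step Rs cs) X)%N -> X \in Y0 :|: Y1.

(* halting runtime RT_halt(n) for volume function vol (volume vol n when
   the initial molecular count is n) *)
Definition RT_halt (Sig S : finType) (Rs : seq (rxn S)) (iota : Sig -> S) (F : S)
    (vol : nat -> real) (n : nat) : \bar real :=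
  ereal_inf [set y | exists rho : vec S -> {set 'I_(size Rs)}, runtime_policy rho /\
    y = ereal_sup [set z | exists (c0 : vec S) (cs : nat -> vec S)
                                   (als : nat -> 'I_(size Rs)) (sigma : nat -> nat),
          valid_init iota F c0 /\ msize c0 = n /\ is_exec c0 cs als /\
          weakly_fair cs als /\ skipping_policy sigma /\
          z = RT_exec (vol n) rho sigma cs als]].

Definition volume_Theta_n (vol : nat -> real) : Prop :=
  exists a b : real, (0 < a)%R /\ (0 < b)%R /\
    forall n : nat, (1 <= n)%N -> (a * n%:R <= vol n <= b * n%:R)%R.

Definition detection (Sig : finType) (psi : {ffun Sig -> nat} -> bool) : Prop :=
  forall x : {ffun Sig -> nat}, psi x = psi [ffun s => nat_of_bool (0 < x s)%N].

(** Each species is a set [K] of input species: a molecule of species [K] knows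
    that the inputs in [K] were initially present.  Input [s] is the molecule
    [[set s]], fuel is the empty set, and every reaction with one or two reactants
    replaces them by as many molecules of the union of their sets.  The molecular
    count is conserved and, for every input [s], the number [unaware s] of
    molecules not knowing [s] never increases and drops at every reaction that
    changes the configuration, so every fair execution halts.  Two distinct species
    would still react, so a halted configuration consists of a single species; as
    "some molecule knows [s]" is invariant, that species is the set of inputs that
    were present, and it decides the detection predicate.  Every species votes, for
    the value of the predicate on its own set.

    Runtime: if [u] of the [n] molecules are unaware of [s], the pairs made of an
    unaware and an aware molecule react at total rate at least [u (n - u) / v], so
    the expected time to the next change is at most [v / (u (n - u))].  Summing
    these waiting times over [u] and over the inputs gives a potential bounding the
    cost of all rounds before halting by [|Sig| * 2 (v / n) H_n = O(log n)]; the
    round in which the execution halts costs at most [1]. *)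

From HB Require Import structures.
From mathcomp Require Import all_boot all_order all_algebra.
From mathcomp Require Import boolp classical_sets reals constructive_ereal ereal exp.
From mathcomp Require Import Rstruct Rstruct_topology.
From mathcomp Require Import zify ring lra.
From Stdlib Require Import ClassicalEpsilon.

Set Implicit Arguments.
Unset Strict Implicit.
Unset Printing Implicit Defensive.

Import Order.TTheory GRing.Theory Num.Theory.

Lemma least_spec (P : nat -> Prop) : (exists n, P n) ->
  P (least P) /\ forall m, P m -> (least P <= m)%N.
Proof.
move=> [n Pn]; apply: (epsilon_spec (inhabits 0%N) (fun n => P n /\ _)).
have exP : exists n, `[< P n >] by exists n; apply/asboolP.
case: (ex_minnP exP) => m /asboolP Pm m_min.
by exists m; split=> // k Pk; apply/m_min/asboolP.
Qed.

Lemma first_change (T : eqType) (f : nat -> T) t t' : (t <= t')%N -> f t' != f t ->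
  exists t0, [/\ (t <= t0 < t')%N, f t0 = f t & f t0.+1 != f t0].
Proof.
move/subnKC <-; elim: (t' - t)%N => [|k IH]; first by rewrite addn0 eqxx.
rewrite addnS => changed.
have [f_k | /IH [t0 [/andP[t_t0 t0_k] f_t0 step_t0]]] := eqVneq (f (t + k)) (f t).
  by exists (t + k); rewrite leq_addr ltnSn f_k.
by exists t0; rewrite t_t0 ltnS ltnW.
Qed.

Section BigTuple.
Local Open Scope ring_scope.

Lemma sum_tuples_prod (R : comPzSemiRingType) (T : finType) (g : T -> R) s :
  \sum_(w : s.-tuple T) \prod_(x <- w) g x = (\sum_x g x) ^+ s.
Proof.
elim: s => [|s IH].
  rewrite expr0 (big_pred1 [tuple]) ?big_nil // => w /=.
  by apply/esym/eqP; apply: tuple0.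
pose cons_tuple (p : T * s.-tuple T) : s.+1.-tuple T := [tuple of p.1 :: p.2].
rewrite (reindex cons_tuple) /=; last first.
  exists (fun w : s.+1.-tuple T => (thead w, [tuple of behead w])) => [[x t] _|w _].
    by rewrite /cons_tuple theadE; congr pair; apply: val_inj.
  by rewrite /cons_tuple /= -tuple_eta.
rewrite -(pair_bigA _ (fun x (t : s.-tuple T) => \prod_(y <- cons_tuple (x, t)) g y)).
rewrite exprS big_distrl /=; apply: eq_bigr => x _.
by rewrite -IH big_distrr /=; apply: eq_bigr => t _; rewrite big_cons.
Qed.

Lemma geometric_sum_le (R : realFieldType) (q : R) N : 0 <= q -> q < 1 ->
  \sum_(s < N) q ^+ s <= (1 - q)^-1.
Proof.
move=> q_ge0 q_lt1; have q1_gt0 : 0 < 1 - q by rewrite subr_gt0.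
rewrite -(ler_pM2r q1_gt0) mulVf ?gt_eqF // -opprB mulrN mulrC -subrX1 opprB.
by rewrite lerBlDr lerDl exprn_ge0.
Qed.

Lemma ler_sum_uniq_sub (R : numDomainType) (T : eqType) (s s' : seq T) (F : T -> R) :
  uniq s -> uniq s' -> {subset s <= s'} -> (forall x, 0 <= F x) ->
  \sum_(x <- s) F x <= \sum_(x <- s') F x.
Proof.
move=> s_uniq s'_uniq ss' F_ge0.
have s'_perm : perm_eq s' (s ++ [seq x <- s' | x \notin s]).
  apply: uniq_perm => //.
    rewrite cat_uniq s_uniq filter_uniq // andbT.
    by apply/hasPn => x; rewrite mem_filter => /andP[].
  by move=> x; rewrite mem_cat mem_filter; case: (boolP (x \in s)) => //= /ss'.
by rewrite (perm_big _ s'_perm) big_cat /= lerDl sumr_ge0.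
Qed.

End BigTuple.

Section Logarithm.
Local Open Scope ring_scope.
Variable R : realType.

Lemma ln_sub_ge (a b : R) : 0 < a -> a <= b -> (b - a) / b <= ln b - ln a.
Proof.
move=> a_gt0 ab; have b_gt0 : 0 < b := lt_le_trans a_gt0 ab.
have : -1 < a / b - 1 by rewrite ltrBrDr addrC subrr divr_gt0.
move/le_ln1Dx; rewrite addrC subrK ln_div ?posrE //.
by rewrite mulrBl divff ?gt_eqF //; lra.
Qed.

Definition harmonic_sum (n : nat) : R := \sum_(j < n) j.+1%:R^-1.

Lemma harmonic_sum_ge0 n : 0 <= harmonic_sum n.
Proof. by apply: sumr_ge0 => j _; rewrite invr_ge0 ler0n. Qed.

Lemma harmonic_sum_le_ln n : (1 <= n)%N -> harmonic_sum n <= 1 + ln n%:R.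
Proof.
elim: n => [//|[|n] IH] _.
  by rewrite /harmonic_sum big_ord_recr big_ord0 /= add0r ln1 addr0 invr1.
rewrite /harmonic_sum big_ord_recr /= -/(harmonic_sum n.+1).
have : (n.+2%:R - n.+1%:R) / n.+2%:R <= ln n.+2%:R - ln n.+1%:R :> R.
  by apply: ln_sub_ge; rewrite ?ltr0Sn ?ler_nat.
rewrite -natrB // subSnn mul1r; have := IH isT.
by set h := harmonic_sum _; set x := _^-1; set l1 := ln _; set l2 := ln _; lra.
Qed.

(* The last term is [0^-1 = 0]. *)
Lemma sum_inv_rev_le_harmonic n :
  \sum_(j < n) (n - j.+1)%:R^-1 <= harmonic_sum n.
Proof.
rewrite (reindex_inj rev_ord_inj) /=.
case: n => [|n]; first by rewrite big_ord0 harmonic_sum_ge0.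
have last_term : (n.+1 - (n.+1 - 1).+1 = 0)%N by lia.
have term (i : 'I_n) : (n.+1 - (n.+1 - (lift ord0 i).+1).+1 = i.+1)%N.
  by rewrite /= /bump /=; have := ltn_ord i; lia.
rewrite big_ord_recl /= last_term invr0 add0r; under eq_bigr => i _ do rewrite term.
by rewrite /harmonic_sum big_ord_recr /= lerDl invr_ge0 ler0n.
Qed.

Lemma ln_nat_ge1 n : (4 <= n)%N -> 1 <= ln (n%:R : R).
Proof.
move=> n_ge4.
have ln2 : 2^-1 <= ln (2 : R).
  have := @ln_sub_ge 1 2 ltr01 (ler1n _ 2); rewrite ln1 subr0.
  have -> : (2 : R) - 1 = 1 by lra.
  by rewrite mul1r.
have : ln (4 : R) <= ln n%:R.
  by rewrite ler_ln ?posrE ?ler_nat // ltr0n (leq_trans _ n_ge4).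
have -> : 4 = 2 * 2 :> R by rewrite -natrM.
by rewrite lnM ?posrE //; lra.
Qed.

End Logarithm.

Section Executions.
Variables (S : finType) (Rs : seq (rxn S)).

Lemma applicableP (a : rxn S) (c : vec S) :
  reflect (forall X, a.1 X <= c X)%N (applicable a c).
Proof. exact: forallP. Qed.

Lemma apply_rxn_idE (a : rxn S) (c : vec S) :
  applicable a c -> (apply_rxn a c == c) = is_void a.
Proof.
move=> /applicableP a_le; apply/eqP/eqP => [ac_id | /esym void_a]; apply/ffunP => X.
  have := congr1 (fun c' : vec S => c' X) ac_id; rewrite /= ffunE.
  by have := a_le X; lia.
by rewrite ffunE void_a subnK.
Qed.

Lemma rx_mem (j : 'I_(size Rs)) : rx j \in Rs.
Proof. exact: mem_tnth. Qed.

Lemma rx_onto (a : rxn S) : a \in Rs -> exists j : 'I_(size Rs), rx j = a.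
Proof. by move=> aRs; have /tnthP[j ->] : a \in in_tuple Rs by []; exists j. Qed.

Lemma halted_nonvoid_inapplicable (c : vec S) (j : 'I_(size Rs)) :
  halted Rs c -> ~~ is_void (rx j) -> ~~ applicable (rx j) c.
Proof.
move=> c_halted nonvoid_j; apply/negP => app_j.
have : reach Rs c (apply_rxn (rx j) c).
  by apply: reach_step (reach_refl _ _); exists (rx j); rewrite ?rx_mem.
by move/c_halted/eqP; rewrite apply_rxn_idE // (negbTE nonvoid_j).
Qed.

Lemma not_halted_nonvoid_applicable (c : vec S) : ~ halted Rs c ->
  exists j : 'I_(size Rs), ~~ is_void (rx j) /\ applicable (rx j) c.
Proof.
move=> not_halted; apply: contra_notP not_halted => none_applicable c' c_c'.
elim: c_c' none_applicable => // x x' x'' [a aRs [app_a ->]] _ IH none_applicable.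
have ac_id : apply_rxn a x = x.
  apply/eqP; rewrite apply_rxn_idE //; apply/negPn/negP => nonvoid_a.
  by apply: none_applicable; have [j rx_j] := rx_onto aRs; exists j; rewrite rx_j.
by rewrite ac_id in IH *; apply: IH.
Qed.

Section Execution.
Variables (c0 : vec S) (cs : nat -> vec S) (als : nat -> 'I_(size Rs)).
Hypothesis cs_exec : is_exec c0 cs als.

Lemma exec_step t :
  applicable (rx (als t)) (cs t) /\ cs t.+1 = apply_rxn (rx (als t)) (cs t).
Proof. by case: cs_exec => _ /(_ t). Qed.

Lemma exec_reach t k : reach Rs (cs t) (cs (t + k)).
Proof.
elim: k t => [|k IH] t; first by rewrite addn0; apply: reach_refl.
rewrite addnS -addSn; have [app_t cs_t] := exec_step t.
by apply: reach_step (IH t.+1); exists (rx (als t)); rewrite ?rx_mem.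
Qed.

Lemma exec_invariant (T : Type) (f : vec S -> T) :
  (forall a c, a \in Rs -> applicable a c -> f (apply_rxn a c) = f c) ->
  forall t, f (cs t) = f c0.
Proof.
move=> f_step; elim=> [|t IH]; first by case: cs_exec => ->.
by have [app_t ->] := exec_step t; rewrite f_step ?rx_mem.
Qed.

Lemma exec_nonincreasing (d : Order.disp_t) (T : porderType d) (f : vec S -> T) :
  (forall a c, a \in Rs -> applicable a c -> (f (apply_rxn a c) <= f c)%O) ->
  forall t t', (t <= t')%N -> (f (cs t') <= f (cs t))%O.
Proof.
move=> f_step t t'; apply: (homo_leq (f := f \o cs) (r := fun x y => y <= x)%O) => //.
- by move=> y x z /[swap]; apply: le_trans.
- by move=> u /=; have [app_u ->] := exec_step u; apply: f_step; rewrite ?rx_mem.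
Qed.

Section Potential.
Variable pot : vec S -> nat.
Hypothesis pot_step_lt : forall a c, a \in Rs -> applicable a c -> apply_rxn a c != c ->
  (pot (apply_rxn a c) < pot c)%N.

Lemma exec_eventually_constant : exists T, forall t, (T <= t)%N -> cs t = cs T.
Proof.
have pot_mono : forall t t', (t <= t')%N -> (pot (cs t') <= pot (cs t))%O.
  apply: exec_nonincreasing => a c aRs app_a; rewrite leEnat.
  have [-> // | changed] := eqVneq (apply_rxn a c) c.
  exact/ltnW/pot_step_lt.
suff : forall k t, (pot (cs t) < k)%N -> exists T, forall t', (T <= t')%N -> cs t' = cs T.
  by move/(_ _ 0%N (ltnSn _)).
elim=> [//|k IH] t pot_t.
have [[t' [t_t' changed]] | constant] := pselect (exists t', (t <= t')%N /\ cs t' != cs t).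
  have [t0 [/andP[t_t0 _] cs_t0 step_t0]] := first_change t_t' changed.
  apply: (IH t0.+1); have [app_t0 cs_t0'] := exec_step t0.
  rewrite cs_t0' in step_t0 *; have := pot_step_lt (rx_mem _) app_t0 step_t0.
  by have := pot_mono _ _ t_t0; rewrite leEnat; lia.
exists t => t' t_t'; apply/eqP; apply: contraT => changed.
by case: constant; exists t'.
Qed.

Hypothesis cs_fair : weakly_fair cs als.

Lemma fair_exec_halts : exists t, halted Rs (cs t).
Proof.
have [T cs_T] := exec_eventually_constant; exists T => c' reach_c'.
suff : forall c c'', reach Rs c c'' -> c = cs T -> c'' = cs T.
  by move/(_ _ _ reach_c' erefl).
move=> c c''; elim=> [// | x x' x'' [a aRs [app_a ->]] _ IH] x_T.
apply: IH; rewrite x_T in app_a *.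
apply/eqP; apply: contraT => changed.
have [j rx_j] := rx_onto aRs; rewrite -rx_j in app_a changed.
have [s T_s [als_s | not_app]] := cs_fair app_a.
  have [_] := exec_step s; rewrite als_s !cs_T ?(leqW T_s) // => cs_s.
  by rewrite -cs_s eqxx in changed.
by rewrite cs_T // app_a in not_app.
Qed.

End Potential.

Section Halting.
Hypothesis cs_halts : exists t, halted Rs (cs t).

Local Notation tstar := (halting_step Rs cs).

Lemma halting_stepP : halted Rs (cs tstar) /\ forall t, halted Rs (cs t) -> (tstar <= t)%N.
Proof. exact: least_spec. Qed.

Lemma exec_after_halting t : (tstar <= t)%N -> cs t = cs tstar.
Proof. by move/subnKC <-; apply: (proj1 halting_stepP); apply: exec_reach. Qed.

End Halting.

End Execution.
End Executions.

Section StochasticTime.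
Local Open Scope ring_scope.
Variables (S : finType) (Rs : seq (rxn S)) (v : real).
Hypothesis v_gt0 : 0 < v.
Implicit Types (c : vec S) (j : 'I_(size Rs)).

Definition nonvoid_policy (c : vec S) : {set 'I_(size Rs)} := [set j | ~~ is_void (rx j)].

Lemma nonvoid_policy_runtime : runtime_policy nonvoid_policy.
Proof. by move=> c j; rewrite inE. Qed.

Local Notation Tot := (tot_propensity Rs v).

Definition nonvoid_rate (c : vec S) : real :=
  \sum_(j < size Rs | ~~ is_void (rx j)) propensity v c j.
Definition void_rate (c : vec S) : real :=
  \sum_(j < size Rs | is_void (rx j)) propensity v c j.

Lemma propensity_ge0 c j : 0 <= propensity v c j.
Proof.
rewrite /propensity divr_ge0 ?divr_ge0 ?ler0n //; first exact: prodr_ge0.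
by case: ifP => _; [apply: ltW | apply: ler01].
Qed.

Lemma tot_propensity_ge0 c : 0 <= Tot c.
Proof. by apply: sumr_ge0 => j _; apply: propensity_ge0. Qed.

Lemma tot_propensity_split c : Tot c = void_rate c + nonvoid_rate c.
Proof. exact: bigID. Qed.

Lemma propensity_applicable c j : propensity v c j != 0 -> applicable (rx j) c.
Proof.
apply: contraR => /forallPn [X not_le].
by rewrite /propensity (bigD1 X) //= bin_small ?mul0r // ltnNge.
Qed.

Lemma nonvoid_rate_gt0 c j : ~~ is_void (rx j) -> applicable (rx j) c -> 0 < nonvoid_rate c.
Proof.
move=> nonvoid_j /applicableP app_j.
have count_gt0 : (0 < count (fun b : rxn S => b.1 == (rx j).1) Rs)%N.
  by rewrite -has_count; apply/hasP; exists (rx j); rewrite ?rx_mem.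
have : 0 < propensity v c j.
  rewrite /propensity !divr_gt0 ?ltr0n //; last by case: ifP.
  by apply: prodr_gt0 => X _; rewrite ltr0n bin_gt0.
move/lt_le_trans; apply; rewrite /nonvoid_rate (bigD1 j) //= lerDl.
by apply: sumr_ge0 => i _; apply: propensity_ge0.
Qed.

Definition void_share (c : vec S) (j : 'I_(size Rs)) : real :=
  if is_void (rx j) then propensity v c j / Tot c else 0.

Lemma void_share_ge0 c j : 0 <= void_share c j.
Proof.
rewrite /void_share; case: ifP => // _.
by rewrite divr_ge0 ?propensity_ge0 ?tot_propensity_ge0.
Qed.

Lemma sum_void_share c : \sum_j void_share c j = void_rate c / Tot c.
Proof. by rewrite /void_share -big_mkcond /= mulr_suml. Qed.

Lemma void_path_prob_le c (w : seq 'I_(size Rs)) : all (fun j => is_void (rx j)) w ->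
  path_prob v c w / Tot (foldl (fun c' a => apply_rxn (rx a) c') c w)
  <= (\prod_(x <- w) void_share c x) / Tot c.
Proof.
elim: w => [|a w IH] /=; first by rewrite big_nil.
case/andP => void_a void_w; rewrite big_cons.
have -> : void_share c a = propensity v c a / Tot c by rewrite /void_share void_a.
have [-> | /propensity_applicable app_a] := eqVneq (propensity v c a) 0.
  by rewrite !mul0r.
rewrite (eqP (etrans (apply_rxn_idE app_a) void_a)) -mulrA -[X in _ <= X]mulrA.
apply: ler_wpM2l; last exact: IH.
by rewrite divr_ge0 ?propensity_ge0 ?tot_propensity_ge0.
Qed.

Definition before_tau c s (w : s.-tuple 'I_(size Rs)) : Prop :=
  forall s', (s' <= s)%N -> ~ tau_cond (cfg_at c w) (onth w) 0%N (nonvoid_policy c) s'.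

Lemma before_tau_void c s (w : s.-tuple 'I_(size Rs)) :
  before_tau c w -> all (fun j => is_void (rx j)) w.
Proof.
move=> w_before; apply/allP => x /onthP [i w_i].
have i_lt : (i < s)%N by rewrite -(size_tuple w) -onthTE w_i.
apply: contraT => nonvoid_x; case: (w_before i.+1 i_lt); split=> //.
by left; exists x; rewrite ?inE.
Qed.

Lemma TC_term_le c s (w : s.-tuple 'I_(size Rs)) :
  (if `[< before_tau c w >] then path_prob v c w / Tot (cfg_at c w s) else 0)
  <= (\prod_(x <- w) void_share c x) / Tot c.
Proof.
case: asboolP => [w_before | _].
  rewrite /cfg_at take_oversize ?size_tuple //.
  exact: void_path_prob_le (before_tau_void w_before).
apply: divr_ge0; last exact: tot_propensity_ge0.
by apply: prodr_ge0 => x _; apply: void_share_ge0.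
Qed.

(* Until the first non-void reaction the configuration stays [c]: the steps counted by
   [TC] are a geometric number of void steps, each of expected duration [1 / Tot c]. *)
Lemma TC_nonvoid_le c : 0 < nonvoid_rate c ->
  (TC v nonvoid_policy c <= (nonvoid_rate c)^-1%:E)%E.
Proof.
move=> rate_gt0; apply: ge_ereal_sup => _ [N _ <-]; rewrite lee_fin.
have void_ge0 : 0 <= void_rate c by apply: sumr_ge0 => j _; apply: propensity_ge0.
have Tot_gt0 : 0 < Tot c by rewrite tot_propensity_split ltr_pwDr.
have q_ge0 : 0 <= void_rate c / Tot c by apply: divr_ge0 => //; apply: ltW.
have q_lt1 : void_rate c / Tot c < 1.
  by rewrite ltr_pdivrMr // mul1r tot_propensity_split ltrDl.
apply: (@le_trans _ _ (\sum_(s < N) (void_rate c / Tot c) ^+ s / Tot c)).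
  apply: ler_sum => s _; rewrite -sum_void_share -sum_tuples_prod mulr_suml.
  by apply: ler_sum => w _; apply: TC_term_le.
rewrite -mulr_suml; apply: le_trans (ler_wpM2r _ (geometric_sum_le N q_ge0 q_lt1)) _.
  by rewrite invr_ge0 ltW.
by rewrite -invfM mulrBl mul1r mulfVK ?gt_eqF // tot_propensity_split addrAC subrr add0r.
Qed.

Lemma TC_nonvoid_halted c : (forall j, ~~ is_void (rx j) -> ~~ applicable (rx j) c) ->
  (TC v nonvoid_policy c <= (Tot c)^-1%:E)%E.
Proof.
move=> none_applicable; apply: ge_ereal_sup => _ [[|N] _ <-]; rewrite lee_fin.
  by rewrite big_ord0 invr_ge0 tot_propensity_ge0.
rewrite big_ord_recl [X in _ + X]big1 ?addr0; last first.
  move=> s _; apply: big1 => w _; case: asboolP => // w_before; exfalso.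
  apply: (w_before 1%N) => //; split=> //; right => j; rewrite inE => nonvoid_j.
  by exists 0%N; rewrite /cfg_at ?take0 //= none_applicable.
apply: le_trans (ler_sum _ (fun w _ => TC_term_le c w)) _.
by rewrite -mulr_suml sum_tuples_prod expr0 mul1r.
Qed.

End StochasticTime.

Section PotentialRuntime.
Local Open Scope ring_scope.
Variables (S : finType) (Rs : seq (rxn S)) (v : real).
Hypothesis v_gt0 : 0 < v.
Variables (c0 : vec S) (cs : nat -> vec S) (als : nat -> 'I_(size Rs)) (sigma : nat -> nat).
Hypothesis cs_exec : is_exec c0 cs als.
Hypothesis cs_halts : exists t, halted Rs (cs t).
Hypothesis tot_ge1 : forall t, 1 <= tot_propensity Rs v (cs t).
Hypothesis sigma_skip : skipping_policy sigma.

Variable Phi : nat -> real.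
Hypothesis Phi_ge0 : forall t, 0 <= Phi t.
Hypothesis Phi_step_le : forall t, Phi t.+1 <= Phi t.
Hypothesis Phi_step_drop : forall t, cs t.+1 != cs t ->
  (nonvoid_rate Rs v (cs t))^-1 <= Phi t - Phi t.+1.

Local Notation rho := (nonvoid_policy Rs).
Local Notation tstar := (halting_step Rs cs).
Local Notation round i := (round_t rho sigma cs als i).
Local Notation te i := (sigma (round i)).

Let halted_tstar := proj1 (halting_stepP cs_halts).
Let after_halting := exec_after_halting cs_exec cs_halts.

Lemma tau_spec t :
  tau_cond cs (fun u => Some (als u)) t (rho (cs t)) (tau cs als t (rho (cs t))).
Proof.
apply: (proj1 (least_spec _)); exists (maxn t tstar).+1.
split; first by rewrite ltnS leq_maxl.
right => j; rewrite inE => nonvoid_j; exists (maxn t tstar).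
  by rewrite leq_maxl leqnSn.
by rewrite after_halting ?leq_maxr // (halted_nonvoid_inapplicable halted_tstar).
Qed.

Lemma skip_lt_round i : (te i < round i.+1)%N.
Proof. by case: (tau_spec (te i)). Qed.

Lemma te_mono i : (te i <= te i.+1)%N.
Proof. exact: leq_trans (ltnW (skip_lt_round i)) (sigma_skip _). Qed.

Lemma round_ge i : (i <= round i)%N.
Proof.
elim: i => [//|i IH].
exact: leq_ltn_trans (leq_trans IH (sigma_skip _)) (skip_lt_round i).
Qed.

Lemma round_change i : (te i < tstar)%N ->
  exists t0, [/\ (te i <= t0 < round i.+1)%N, cs t0 = cs (te i) & cs t0.+1 != cs t0].
Proof.
move=> before_halt.
have not_halted : ~ halted Rs (cs (te i)).
  by move/(proj2 (halting_stepP cs_halts)); rewrite leqNgt before_halt.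
have [round_gt [[j als_j nonvoid_j] | all_blocked]] := tau_spec (te i).
  set t1 := (round i.+1).-1 in als_j.
  have round_t1 : round i.+1 = t1.+1 by rewrite prednK // (leq_ltn_trans _ round_gt).
  have te_t1 : (te i <= t1)%N by rewrite -ltnS -round_t1.
  have [app_t1 cs_t1] := exec_step cs_exec t1; case: als_j => als_j.
  have changed_t1 : cs t1.+1 != cs t1.
    by rewrite cs_t1 apply_rxn_idE // als_j; rewrite inE in nonvoid_j.
  have [cs_t1_te | moved] := eqVneq (cs t1) (cs (te i)).
    by exists t1; rewrite te_t1 round_t1 ltnSn -cs_t1_te.
  have [t0 [/andP[te_t0 t0_t1] cs_t0 changed]] := first_change te_t1 moved.
  by exists t0; rewrite te_t0 round_t1 ltnW.
have [j [nonvoid_j app_j]] := not_halted_nonvoid_applicable not_halted.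
have /all_blocked [w /andP[te_w w_round] blocked] : j \in rho (cs (te i)) by rewrite inE.
have moved : cs w != cs (te i) by apply: contraNneq blocked => ->.
have [t0 [/andP[te_t0 t0_w] cs_t0 changed]] := first_change te_w moved.
by exists t0; rewrite te_t0 (leq_trans t0_w).
Qed.

Lemma Phi_mono t t' : (t <= t')%N -> Phi t' <= Phi t.
Proof.
apply: (homo_leq (r := fun x y => y <= x)) => // y x z.
by move=> /[swap]; apply: le_trans.
Qed.

Lemma TC_round_le i : (TC v rho (cs (te i)) <=
  (Phi (te i) - Phi (te i.+1) + (if (tstar <= te i)%N then 1 else 0))%:E)%E.
Proof.
have drop_ge0 : 0 <= Phi (te i) - Phi (te i.+1).
  by rewrite subr_ge0 Phi_mono ?te_mono.
case: ifPn => [halted_te | ]; last rewrite -ltnNge => before_halt.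
  have none_applicable (j : 'I_(size Rs)) :
      ~~ is_void (rx j) -> ~~ applicable (rx j) (cs (te i)).
    by rewrite after_halting //; apply: (halted_nonvoid_inapplicable halted_tstar).
  apply: le_trans (TC_nonvoid_halted v_gt0 none_applicable) _.
  rewrite lee_fin; have Tot_ge1 := tot_ge1 (te i).
  have : (tot_propensity Rs v (cs (te i)))^-1 <= 1.
    by rewrite invf_le1 // (lt_le_trans ltr01 Tot_ge1).
  by move: drop_ge0; lra.
have [t0 [/andP[te_t0 t0_round] cs_t0 changed]] := round_change before_halt.
have [app_t0 cs_t0'] := exec_step cs_exec t0.
have rate_gt0 : 0 < nonvoid_rate Rs v (cs t0).
  by apply: (nonvoid_rate_gt0 v_gt0 _ app_t0); rewrite -(apply_rxn_idE app_t0) -cs_t0'.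
have drop := Phi_step_drop changed.
have later : Phi (te i.+1) <= Phi t0.+1.
  by apply: Phi_mono; apply: leq_trans t0_round (sigma_skip _).
have earlier : Phi t0 <= Phi (te i) by apply: Phi_mono.
apply: le_trans (TC_nonvoid_le v_gt0 _) _; rewrite -cs_t0 // lee_fin addr0.
by move: drop later earlier; lra.
Qed.

Lemma RT_exec_le_potential : (RT_exec v rho sigma cs als <= (Phi 0 + 1)%:E)%E.
Proof.
rewrite /RT_exec; set istar := least _.
have [_ istar_min] : (tstar <= round istar)%N /\
    forall i, (tstar <= round i)%N -> (istar <= i)%N.
  by apply: least_spec; exists tstar; apply: round_ge.
apply: le_trans (lee_sum (P := xpredT) _ _) _ => [i _|]; first exact: TC_round_le.
rewrite sumEFin lee_fin big_split /=.
have -> : \sum_(i < istar) (Phi (te i) - Phi (te i.+1)) =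
    Phi (te 0) - Phi (te istar).
  rewrite -(big_mkord xpredT (fun i => Phi (te i) - Phi (te i.+1))).
  rewrite (telescope_sumr_eq (fun i => - Phi (te i))) // => [|k _].
    by rewrite opprK addrC.
  by rewrite opprK addrC.
have at_most_one_halted_round :
    \sum_(i < istar) (if (tstar <= te i)%N then 1 else 0) <= 1 :> real.
  case: istar istar_min => [|k] istar_min; first by rewrite big_ord0.
  rewrite big_ord_recr /= big1 ?add0r => [|i _]; first by case: ifP.
  case: ifP => // halted_i.
  have := istar_min i.+1 (leq_trans halted_i (ltnW (skip_lt_round i))).
  by rewrite ltnS leqNgt ltn_ord.
by have := Phi_mono (leq0n (te 0)); have := Phi_ge0 (te istar); lra.
Qed.

End PotentialRuntime.

Section Counting.
Variable S : finType.
Implicit Types (c r : vec S) (Y : {set S}).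

Lemma vec_le_msize c X : (c X <= msize c)%N.
Proof. by rewrite /msize (bigD1 X) //= leq_addr. Qed.

Lemma msize_cntT c : msize c = cnt [set: S] c.
Proof. by apply: eq_bigl => X; rewrite inE. Qed.

Lemma msize_cntC Y c : msize c = (cnt Y c + cnt (~: Y) c)%N.
Proof.
rewrite /msize (bigID (mem Y)) /=; congr (_ + _)%N.
by apply: eq_bigl => X; rewrite inE.
Qed.

Lemma leq_cnt Y r c : (forall X, r X <= c X)%N -> (cnt Y r <= cnt Y c)%N.
Proof. by move=> r_le; apply: leq_sum => X _. Qed.

Lemma cnt_apply_rxn Y (a : rxn S) c : applicable a c ->
  cnt Y (apply_rxn a c) = (cnt Y c - cnt Y a.1 + cnt Y a.2)%N.
Proof.
move=> /applicableP a_le.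
have -> : cnt Y (apply_rxn a c) = (\sum_(X in Y) (c X - a.1 X) + cnt Y a.2)%N.
  by rewrite /cnt -big_split; apply: eq_bigr => X _; rewrite ffunE.
have <- : (\sum_(X in Y) (c X - a.1 X) + cnt Y a.1)%N = cnt Y c.
  by rewrite /cnt -big_split; apply: eq_bigr => X _; rewrite /= subnK.
by rewrite addnK.
Qed.

Lemma cnt_single Y K m :
  cnt Y [ffun X : S => if X == K then m else 0%N] = if K \in Y then m else 0%N.
Proof.
rewrite /cnt; case: ifPn => [K_Y | K_notY].
  rewrite (bigD1 K) //= ffunE eqxx big1 ?addn0 // => X /andP[_ XK].
  by rewrite ffunE (negbTE XK).
by rewrite big1 // => X X_Y; rewrite ffunE; case: eqP => // XK; rewrite -XK X_Y in K_notY.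
Qed.

Lemma cnt_supp Y r : (forall X, (0 < r X)%N -> X \in Y) -> cnt Y r = msize r.
Proof.
move=> r_supp; rewrite (msize_cntC Y r) [cnt (~: Y) r]big1 ?addn0 // => X.
by rewrite inE; apply: contraNeq; rewrite -lt0n => /r_supp.
Qed.

Lemma msize_gt0_supp c : (0 < msize c)%N -> exists X, (0 < c X)%N.
Proof.
move=> c_gt0; apply/existsP; apply: contraLR c_gt0; rewrite negb_exists => /forallP c0.
by rewrite -leqNgt leqn0 sum_nat_eq0; apply/forallP => X; have := c0 X; rewrite lt0n negbK.
Qed.

End Counting.

Section MergeCRN.
Variable Sig : finType.
Local Notation species := {set Sig}.
Implicit Types (c r : vec species) (K : species) (s : Sig).

Definition reactant_union r : species := \bigcup_(K | (0 < r K)%N) K.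

Definition merge r : vec species :=
  [ffun K => if K == reactant_union r then msize r else 0%N].

Definition small_vec (f : {ffun species -> 'I_3}) : vec species := [ffun K => val (f K)].

(* All reactant vectors of size 1 or 2, enumerated through the vectors with entries
   in ['I_3]. *)
Definition merge_reactants : seq (vec species) :=
  [seq small_vec f | f <- enum [pred f | 1 <= msize (small_vec f) <= 2]%N].

Definition merge_crn : seq (rxn species) := [seq (r, merge r) | r <- merge_reactants].

Lemma merge_reactants_uniq : uniq merge_reactants.
Proof.
rewrite map_inj_uniq ?enum_uniq // => f g /ffunP fg; apply/ffunP => K.
by apply: val_inj; have := fg K; rewrite !ffunE.
Qed.

Lemma merge_crn_uniq : uniq merge_crn.
Proof. by rewrite map_inj_uniq ?merge_reactants_uniq // => r1 r2 [->]. Qed.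

Lemma mem_merge_reactants r : (r \in merge_reactants) = (1 <= msize r <= 2)%N.
Proof.
apply/mapP/idP => [[f] | r_size]; first by rewrite mem_enum inE => ? ->.
have r_lt3 K : (r K < 3)%N.
  by apply: leq_ltn_trans (vec_le_msize r K) _; case/andP: r_size.
have r_small : small_vec [ffun K => Ordinal (r_lt3 K)] = r.
  by apply/ffunP => K; rewrite !ffunE.
by exists [ffun K => Ordinal (r_lt3 K)]; rewrite // mem_enum inE r_small.
Qed.

Lemma merge_crnP (a : rxn species) :
  a \in merge_crn -> a.2 = merge a.1 /\ a.1 \in merge_reactants.
Proof. by case/mapP => r r_in ->. Qed.

Lemma merge_crn_count r : r \in merge_reactants ->
  count (fun b : rxn species => b.1 == r) merge_crn = 1%N.
Proof.
move=> r_in; rewrite count_map (eq_count (a2 := pred1 r)) // count_uniq_mem //.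
  by rewrite r_in.
exact: merge_reactants_uniq.
Qed.

Lemma msize_merge r : msize (merge r) = msize r.
Proof. by rewrite msize_cntT cnt_single inE. Qed.

Lemma merge_step_msize (a : rxn species) c : a \in merge_crn -> applicable a c ->
  msize (apply_rxn a c) = msize c.
Proof.
move=> /merge_crnP [a2 _] app_a.
have a1_le : (msize a.1 <= msize c)%N.
  by rewrite !msize_cntT; apply: leq_cnt; apply/applicableP.
by rewrite msize_cntT cnt_apply_rxn // a2 -!msize_cntT msize_merge subnK.
Qed.

Lemma merge_crn_wf : wf_CRN merge_crn.
Proof.
split.
- exact: merge_crn_uniq.
- by move=> a /merge_crnP [-> r_in]; rewrite msize_merge leqnn andbT -mem_merge_reactants.
- by move=> r r_size; exists (merge r); apply: map_f; rewrite mem_merge_reactants.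
- by move=> r p /merge_crnP [/= r_id _] /merge_crnP [/= -> _].
- exists 1%N => c c'; elim => [x | x x' x'' [a a_in [app_a ->]] _]; rewrite !mul1n //.
  by rewrite merge_step_msize.
Qed.

Lemma merge_supp r K : (0 < merge r K)%N -> K = reactant_union r.
Proof. by rewrite ffunE; case: eqP. Qed.

Definition unaware s c : nat := cnt [set K : species | s \notin K] c.

Lemma unaware_le_msize s c : (unaware s c <= msize c)%N.
Proof. by rewrite (msize_cntC [set K : species | s \notin K] c) leq_addr. Qed.

Lemma unaware_merge s r :
  unaware s (merge r) = if s \in reactant_union r then 0%N else msize r.
Proof. by rewrite /unaware cnt_single inE; case: (s \in _). Qed.

Lemma unaware_reactants s r : s \notin reactant_union r -> unaware s r = msize r.
Proof.
move=> s_notin; apply: cnt_supp => K r_K; rewrite inE.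
by apply: contra s_notin => s_K; apply/finset.bigcupP; exists K.
Qed.

Lemma merge_id r : (forall s, s \in reactant_union r -> unaware s r = 0%N) -> merge r = r.
Proof.
move=> aware; have supp K : (0 < r K)%N -> K = reactant_union r.
  move=> r_K; apply/eqP; rewrite finset.eqEsubset; apply/andP; split.
    by apply/fintype.subsetP => s s_K; apply/finset.bigcupP; exists K.
  apply/fintype.subsetP => s /aware /eqP; rewrite sum_nat_eq0 => /forallP /(_ K).
  by rewrite inE; case: (s \in K) => //= /eqP r_K0; rewrite r_K0 in r_K.
have r_off K : K != reactant_union r -> r K = 0%N.
  by apply: contraNeq; rewrite -lt0n => /supp ->.
apply/ffunP => K; rewrite ffunE; case: eqP => [-> | /eqP K_ne]; last by rewrite r_off.
by rewrite /msize (bigD1 (reactant_union r)) //= big1 ?addn0 // => X /andP[_ /r_off].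
Qed.

Section MergeStep.
Variables (a : rxn species) (c : vec species).
Hypotheses (a_in : a \in merge_crn) (app_a : applicable a c).
Local Notation c' := (apply_rxn a c).
Local Notation r := a.1.

Lemma unaware_reactants_le s : (unaware s r <= unaware s c)%N.
Proof. by apply: leq_cnt; apply/applicableP. Qed.

Lemma unaware_step s : unaware s c' =
  (unaware s c - unaware s r + (if s \in reactant_union r then 0 else msize r))%N.
Proof. by rewrite /unaware cnt_apply_rxn // (proj1 (merge_crnP a_in)) -unaware_merge. Qed.

Lemma unaware_step_le s : (unaware s c' <= unaware s c)%N.
Proof.
rewrite unaware_step; have := unaware_reactants_le s.
by case: ifPn => [_ | /unaware_reactants ->]; lia.
Qed.

Lemma union_known s : s \in reactant_union r -> (unaware s c < msize c)%N.
Proof.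
case/finset.bigcupP => K r_K s_K.
rewrite (msize_cntC [set K : species | s \notin K] c) -/(unaware s c).
rewrite -[X in (X < _)%N]addn0 ltn_add2l.
rewrite (leq_trans r_K (leq_trans (applicableP _ _ app_a K) _)) //.
by rewrite /cnt (bigD1 K) ?leq_addr // !inE s_K.
Qed.

(* [unaware s c < msize c] says that some molecule of [c] knows [s]. *)
Lemma known_step s : (unaware s c' < msize c')%N = (unaware s c < msize c)%N.
Proof.
rewrite merge_step_msize //; have [s_in | s_notin] := boolP (s \in reactant_union r).
  by rewrite (union_known s_in) (leq_ltn_trans (unaware_step_le s) (union_known s_in)).
rewrite unaware_step (negbTE s_notin) -(unaware_reactants s_notin).
by have := unaware_reactants_le s; move=> ?; congr (_ < _)%N; lia.
Qed.

Lemma step_learns : c' != c ->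
  exists s, (unaware s c' < unaware s c < msize c)%N.
Proof.
move=> moved.
have : [exists s, (s \in reactant_union r) && (unaware s r != 0%N)].
  apply: contraR moved; rewrite negb_exists => /forallP aware.
  rewrite (eqP (etrans (apply_rxn_idE app_a) _)) //; apply/eqP.
  rewrite (proj1 (merge_crnP a_in)) merge_id // => s s_in.
  by have := aware s; rewrite s_in /= negbK => /eqP.
case/existsP => s /andP[s_in r_aware]; exists s; rewrite union_known // andbT.
rewrite unaware_step s_in addn0; have := unaware_reactants_le s.
by move: r_aware; rewrite -lt0n; have := union_known s_in; lia.
Qed.

End MergeStep.

Definition ignorance c : nat := (\sum_s unaware s c)%N.

Lemma ignorance_step_lt (a : rxn species) c : a \in merge_crn -> applicable a c ->
  apply_rxn a c != c -> (ignorance (apply_rxn a c) < ignorance c)%N.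
Proof.
move=> a_in app_a /(step_learns a_in app_a) [s /andP[learns _]].
rewrite /ignorance (bigD1 s) //= [X in (_ < X)%N](bigD1 s) //= -addSn leq_add //.
by apply: leq_sum => s' _; apply: unaware_step_le.
Qed.

End MergeCRN.

Section MergeDecides.
Variables (Sig : finType) (psi : {ffun Sig -> nat} -> bool).
Local Notation species := {set Sig}.
Implicit Types (c : vec species) (K : species) (s : Sig).

Definition pair_vec K1 K2 : vec species := [ffun K => ((K == K1) + (K == K2))%N].

Lemma msize_pair K1 K2 : msize (pair_vec K1 K2) = 2%N.
Proof.
have one K' : (\sum_K (K == K'))%N = 1%N.
  by rewrite (bigD1 K') //= eqxx big1 // => K /negbTE ->.
by rewrite /msize; under eq_bigr do rewrite ffunE; rewrite big_split /= !one.
Qed.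

Lemma pair_in_crn K1 K2 : (pair_vec K1 K2, merge (pair_vec K1 K2)) \in merge_crn Sig.
Proof. by apply: map_f; rewrite mem_merge_reactants msize_pair. Qed.

Lemma pair_moves K1 K2 : K1 != K2 -> merge (pair_vec K1 K2) != pair_vec K1 K2.
Proof.
move=> K12; apply: contra K12 => /eqP fixed.
have supp K : (0 < pair_vec K1 K2 K)%N -> K = reactant_union (pair_vec K1 K2).
  by move=> pos; apply: merge_supp; rewrite fixed.
have pos1 : (0 < pair_vec K1 K2 K1)%N by rewrite ffunE eqxx.
have pos2 : (0 < pair_vec K1 K2 K2)%N by rewrite ffunE eqxx addn1.
by apply/eqP; rewrite [LHS](supp K1 pos1) [RHS](supp K2 pos2).
Qed.

Lemma halted_uniform c K1 K2 : halted (merge_crn Sig) c ->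
  (0 < c K1)%N -> (0 < c K2)%N -> K1 = K2.
Proof.
move=> c_halted c_K1 c_K2; apply/eqP; apply: contraT => K12.
have [j rx_j] := rx_onto (pair_in_crn K1 K2).
have nonvoid_j : ~~ is_void (rx j) by rewrite rx_j /is_void eq_sym pair_moves.
case/negP: (halted_nonvoid_inapplicable c_halted nonvoid_j).
apply/applicableP => K; rewrite rx_j ffunE.
case: eqP => [-> | _]; case: eqP => [K2_eq | _] //.
  by rewrite K2_eq eqxx in K12.
by rewrite K2_eq.
Qed.

Definition input_species s : species := [set s].
Definition fuel : species := finset.set0.
Definition yes_voters : {set species} :=
  [set K : species | psi [ffun s => nat_of_bool (s \in K)]].
Definition no_voters : {set species} := ~: yes_voters.

Lemma known_initially c0 s : valid_init input_species fuel c0 ->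
  (unaware s c0 < msize c0)%N = (0 < c0 [set s])%N.
Proof.
case=> c0_inputs _; rewrite (msize_cntC [set K : species | s \notin K] c0) -/(unaware s c0).
rewrite -[X in (X < _)%N]addn0 ltn_add2l; congr (0 < _)%N.
rewrite /cnt (bigD1 [set s]) /=; last by rewrite !inE eqxx.
rewrite big1 ?addn0 // => K /andP[]; rewrite !inE negbK => s_K K_ne.
apply: c0_inputs => [s' | ].
  apply: contraNneq K_ne => K_eq; rewrite K_eq in s_K *.
  by rewrite (finset.set1P s_K).
by apply: contraTneq s_K => ->; rewrite inE.
Qed.

Hypothesis psi_detection : detection psi.

Lemma merge_crn_decides :
  haltingly_decides (merge_crn Sig) input_species fuel no_voters yes_voters psi.
Proof.
move=> c0 cs als c0_valid cs_exec cs_fair.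
have [T T_halted] := fair_exec_halts cs_exec (@ignorance_step_lt Sig) cs_fair.
exists T; split=> //.
have msize_T : msize (cs T) = msize c0 := exec_invariant cs_exec (@merge_step_msize Sig) T.
have [K T_K] : exists K, (0 < cs T K)%N.
  apply: msize_gt0_supp; rewrite msize_T; case: c0_valid => _ fuel_pos.
  exact: leq_trans fuel_pos (vec_le_msize c0 fuel).
have cnt_T Y : cnt Y (cs T) = if K \in Y then cs T K else 0%N.
  rewrite -cnt_single; congr cnt; apply/ffunP => K'; rewrite ffunE.
  case: eqP => [-> // | K'_ne]; apply/eqP; rewrite eqn0Ngt; apply/negP => T_K'.
  exact/K'_ne/(halted_uniform T_halted T_K' T_K).
have K_inputs s : (s \in K) = (0 < c0 [set s])%N.
  have known_T := exec_invariant cs_exec (fun a c a_in app_a => known_step a_in app_a s) T.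
  rewrite -known_initially // -known_T /unaware msize_cntT !cnt_T !inE.
  by case: (s \in K); rewrite /= ?T_K ?ltnn.
have psi_K : psi (input_of input_species c0) = (K \in yes_voters).
  by rewrite psi_detection inE; congr psi; apply/ffunP => i; rewrite !ffunE K_inputs.
rewrite /in_D !cnt_T psi_K /no_voters finset.in_setC.
by case: (K \in yes_voters); rewrite /= T_K eqxx.
Qed.

End MergeDecides.

Section MergeRates.
Local Open Scope ring_scope.
Variables (Sig : finType) (v : real).
Hypothesis v_gt0 : 0 < v.
Local Notation species := {set Sig}.
Local Notation crn := (merge_crn Sig).
Implicit Types (c r : vec species) (K : species) (s : Sig).

Definition reactant_rate c r : real :=
  (\prod_K ('C(c K, r K))%:R) / (if msize r == 2%N then v else 1).

Lemma reactant_rate_ge0 c r : 0 <= reactant_rate c r.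
Proof.
apply: divr_ge0; first by apply: prodr_ge0 => K _; apply: ler0n.
by case: ifP => _; [apply: ltW | apply: ler01].
Qed.

Lemma nonvoid_rate_merge c : nonvoid_rate crn v c =
  \sum_(r <- merge_reactants Sig) (if merge r != r then reactant_rate c r else 0).
Proof.
rewrite -big_mkcond /= -(big_map (fun r => (r, merge r)) (fun a => a.2 != a.1)
  (fun a => (\prod_K ('C(c K, a.1 K))%:R) / (if msize a.1 == 2%N then v else 1))).
rewrite /nonvoid_rate (big_tnth _ _ crn); apply: eq_big => [j | j _].
  by rewrite /is_void eq_sym.
rewrite /propensity merge_crn_count ?divr1 //; exact: (proj2 (merge_crnP (rx_mem j))).
Qed.

Lemma reactant_rate_pair c K1 K2 : K1 != K2 ->
  reactant_rate c (pair_vec K1 K2) = (c K1)%:R * (c K2)%:R / v.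
Proof.
move=> K12; rewrite /reactant_rate msize_pair eqxx.
rewrite (bigD1 K1) // (bigD1 K2) 1?eq_sym //= big1 ?mulr1 => [|K /andP[K1K K2K]].
  by rewrite /pair_vec !ffunE !eqxx (negbTE K12) (eq_sym K2 K1) (negbTE K12) /= !bin1.
by rewrite /pair_vec ffunE (negbTE K1K) (negbTE K2K) bin0.
Qed.

Lemma pair_vec_inj s :
  {in [pred p : species * species | (s \notin p.1) && (s \in p.2)] &,
    injective (fun p => pair_vec p.1 p.2)}.
Proof.
have ne K K' : s \notin K -> s \in K' -> (K == K') = false.
  by move=> sK sK'; apply: contraNF sK => /eqP ->.
have ne' K K' : s \in K -> s \notin K' -> (K == K') = false.
  by move=> sK sK'; rewrite eq_sym ne.
move=> [K1 K2] [K1' K2'] /andP[/= s1 s2] /andP[/= s1' s2'] /ffunP same.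
have := same K1; have := same K2; rewrite /pair_vec !ffunE !eqxx.
rewrite (ne _ _ s1 s2) (ne _ _ s1 s2') (ne' _ _ s2 s1) (ne' _ _ s2 s1') /=.
by case: eqP => [<- | _]; case: eqP => [<- | _].
Qed.

Lemma nonvoid_rate_lower c s :
  (unaware s c)%:R * (msize c - unaware s c)%:R / v <= nonvoid_rate crn v c.
Proof.
pose D := [pred p : species * species | (s \notin p.1) && (s \in p.2)].
pose pairs := [seq pair_vec p.1 p.2 | p <- enum D].
have pairs_uniq : uniq pairs.
  by rewrite map_inj_in_uniq ?enum_uniq // => p q; rewrite !mem_enum; apply: pair_vec_inj.
have pairs_sub : {subset pairs <= merge_reactants Sig}.
  by move=> r /mapP [p _ ->]; rewrite mem_merge_reactants msize_pair.
rewrite nonvoid_rate_merge.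
apply: le_trans
  (ler_sum_uniq_sub pairs_uniq (merge_reactants_uniq Sig) pairs_sub _) => [|r].
  rewrite big_map big_enum /= (eq_bigr (fun p => (c p.1)%:R * (c p.2)%:R / v)).
    rewrite -(pair_big (fun K1 : species => s \notin K1) (fun K2 : species => s \in K2)
      (fun K1 K2 => (c K1)%:R * (c K2)%:R / v)) /=.
    have unaware_sum : unaware s c = (\sum_(K1 : species | s \notin K1) c K1)%N.
      by apply: eq_bigl => K; rewrite inE.
    have aware_sum : (msize c - unaware s c)%N = (\sum_(K2 : species | s \in K2) c K2)%N.
      rewrite (msize_cntC [set K : species | s \notin K] c) -/(unaware s c) addKn.
      by apply: eq_bigl => K; rewrite !inE negbK.
    rewrite aware_sum unaware_sum !natr_sum -mulrA mulr_suml; apply: ler_sum => K1 _.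
    by rewrite mulr_suml mulr_sumr; apply: ler_sum => K2 _; rewrite mulrA.
  move=> [K1 K2]; rewrite inE /= => /andP[s1 s2].
  have K12 : K1 != K2 by apply: contraNneq s1 => ->.
  by rewrite pair_moves // reactant_rate_pair.
by case: ifP => _; rewrite ?reactant_rate_ge0.
Qed.

Lemma tot_propensity_ge1 c : (0 < msize c)%N -> 1 <= tot_propensity crn v c.
Proof.
case/msize_gt0_supp => K c_K.
pose e := [ffun K' : species => if K' == K then 1%N else 0%N].
have msize_e : msize e = 1%N by rewrite msize_cntT cnt_single inE.
have [j rx_j] : exists j : 'I_(size crn), rx j = (e, merge e).
  by apply: rx_onto; apply: map_f; rewrite mem_merge_reactants msize_e.
rewrite /tot_propensity (bigD1 j) //= -[1]addr0 lerD //; last first.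
  by apply: sumr_ge0 => i _; apply: propensity_ge0.
rewrite /propensity rx_j /= merge_crn_count ?mem_merge_reactants ?msize_e // !divr1.
rewrite (bigD1 K) //= big1 ?mulr1 => [|K' /negbTE K'_ne]; last by rewrite ffunE K'_ne bin0.
by rewrite ffunE eqxx bin1 ler1n.
Qed.

End MergeRates.

Section KnowledgePotential.
Local Open Scope ring_scope.
Variables (n : nat) (v : real).
Hypothesis v_gt0 : 0 < v.

(* For [0 < j < n] this is [v / (j (n - j))]: the expected waiting time for a
   reaction between the [j] molecules unaware of a species and the [n - j] aware ones. *)
Definition step_weight (j : nat) : real := v / n%:R * (j%:R^-1 + (n - j)%:R^-1).

Definition level_weight (m : nat) : real := \sum_(j < m) step_weight j.+1.

Lemma step_weight_ge0 j : 0 <= step_weight j.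
Proof. by rewrite mulr_ge0 ?divr_ge0 ?addr_ge0 ?invr_ge0 ?ler0n ?ltW. Qed.

Lemma level_weight_ge0 m : 0 <= level_weight m.
Proof. by apply: sumr_ge0 => j _; apply: step_weight_ge0. Qed.

Lemma level_weight_mono : {homo level_weight : m m' / (m <= m')%N >-> m <= m'}.
Proof.
apply: homo_leq => [x|y x z|m]; [exact: lexx | exact: le_trans |].
by rewrite /level_weight big_ord_recr lerDl step_weight_ge0.
Qed.

Lemma level_weight_drop m m' :
  (m' < m)%N -> level_weight m' + step_weight m <= level_weight m.
Proof.
case: m => [//|m] m'_le; rewrite /level_weight big_ord_recr lerD2r.
exact: level_weight_mono.
Qed.

Lemma inv_rate_le_step_weight (P : real) u : (0 < u < n)%N ->
  u%:R * (n - u)%:R / v <= P -> P^-1 <= step_weight u.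
Proof.
case/andP => u_gt0 u_lt rate_le.
have u_pos : 0 < u%:R :> real by rewrite ltr0n.
have nu_pos : 0 < (n - u)%:R :> real by rewrite ltr0n subn_gt0.
have rate_gt0 : 0 < u%:R * (n - u)%:R / v :> real by rewrite divr_gt0 ?mulr_gt0.
apply: le_trans (_ : (u%:R * (n - u)%:R / v)^-1 <= _).
  by rewrite lef_pV2 ?posrE // (lt_le_trans rate_gt0).
rewrite /step_weight; have -> : n%:R = u%:R + (n - u)%:R :> real.
  by rewrite -natrD subnKC // ltnW.
rewrite le_eqVlt; apply/orP; left; apply/eqP.
by field; rewrite (gt_eqF u_pos) (gt_eqF nu_pos) (gt_eqF v_gt0) gt_eqF ?addr_gt0.
Qed.

Lemma level_weight_le_harmonic : level_weight n <= 2 * (v / n%:R) * harmonic_sum real n.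
Proof.
rewrite /level_weight /step_weight -mulr_sumr big_split /= -/(harmonic_sum real n).
have k_ge0 : 0 <= v / n%:R by rewrite divr_ge0 ?ler0n ?ltW.
by have := ler_wpM2l k_ge0 (sum_inv_rev_le_harmonic real n); lra.
Qed.

End KnowledgePotential.

Section MergeRuntime.
Local Open Scope ring_scope.
Variables (Sig : finType) (v : real).
Hypothesis v_gt0 : 0 < v.
Local Notation crn := (merge_crn Sig).

Definition knowledge_potential (n : nat) (c : vec {set Sig}) : real :=
  \sum_s level_weight n v (unaware s c).

Lemma merge_RT_exec_le c0 cs (als : nat -> 'I_(size crn)) sigma :
  is_exec c0 cs als -> weakly_fair cs als -> skipping_policy sigma -> (0 < msize c0)%N ->
  (RT_exec v (nonvoid_policy crn) sigma cs als <=
    (knowledge_potential (msize c0) c0 + 1)%:E)%E.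
Proof.
move=> cs_exec cs_fair sigma_skip c0_gt0; set n := msize c0.
have msize_cs t : msize (cs t) = n := exec_invariant cs_exec (@merge_step_msize Sig) t.
have cs_halts := fair_exec_halts cs_exec (@ignorance_step_lt Sig) cs_fair.
have tot_ge1 t : 1 <= tot_propensity crn v (cs t).
  by apply: (tot_propensity_ge1 v_gt0); rewrite msize_cs.
have unaware_le t s : (unaware s (cs t.+1) <= unaware s (cs t))%N.
  by have [app_t ->] := exec_step cs_exec t; apply: unaware_step_le; rewrite ?rx_mem.
have <- : cs 0%N = c0 by case: cs_exec.
apply: (RT_exec_le_potential v_gt0 cs_exec cs_halts tot_ge1 sigma_skip
          (Phi := fun t => knowledge_potential n (cs t))) => [t | t | t moved].
- by apply: sumr_ge0 => s _; apply: level_weight_ge0.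
- by apply: ler_sum => s _; apply: level_weight_mono.
have [app_t cs_t] := exec_step cs_exec t.
rewrite cs_t in moved; have [s /andP[learns known]] := step_learns (rx_mem _) app_t moved.
rewrite -cs_t msize_cs in learns known.
have u_range : (0 < unaware s (cs t) < n)%N by rewrite known (leq_ltn_trans _ learns).
have rate_le := nonvoid_rate_lower v_gt0 (cs t) s; rewrite msize_cs in rate_le.
have step_le := inv_rate_le_step_weight v_gt0 u_range rate_le.
have level_le := level_weight_drop n v_gt0 learns.
have others : \sum_(i | i != s) level_weight n v (unaware i (cs t.+1)) <=
    \sum_(i | i != s) level_weight n v (unaware i (cs t)).
  by apply: ler_sum => i _; apply: level_weight_mono.
rewrite /knowledge_potential (bigD1 s) //= [X in _ - X](bigD1 s) //=.
by move: step_le level_le others; lra.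
Qed.

End MergeRuntime.

Section MergeHaltingTime.
Local Open Scope ring_scope.

Lemma merge_RT_halt_le (Sig : finType) (vol : nat -> real) n : (1 <= n)%N -> 0 < vol n ->
  (RT_halt (merge_crn Sig) (@input_species Sig) (fuel Sig) vol n <=
    (#|Sig|%:R * level_weight n (vol n) n + 1)%:E)%E.
Proof.
move=> n_ge1 vol_gt0; rewrite /RT_halt; apply: le_trans (ereal_inf_lbound _) _.
  by exists (nonvoid_policy (merge_crn Sig)); split; first exact: nonvoid_policy_runtime.
apply: ge_ereal_sup => _ [c0 [cs [als [sigma [_ [c0_size [cs_exec [cs_fair [skip ->]]]]]]]]].
apply: le_trans (merge_RT_exec_le vol_gt0 cs_exec cs_fair skip _) _.
  by rewrite c0_size.
rewrite lee_fin lerD2r c0_size.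
apply: (@le_trans _ _ (\sum_(s : Sig) level_weight n (vol n) n)).
  apply: ler_sum => s _; apply: (level_weight_mono n vol_gt0).
  by rewrite -c0_size; apply: unaware_le_msize.
by rewrite sumr_const mulr_natl.
Qed.

Lemma merge_RT_halt_le_ln (Sig : finType) (vol : nat -> real) b n :
  (4 <= n)%N -> 0 < vol n -> vol n <= b * n%:R ->
  (RT_halt (merge_crn Sig) (@input_species Sig) (fuel Sig) vol n <=
    ((4 * #|Sig|%:R * b + 1) * ln n%:R)%:E)%E.
Proof.
move=> n_ge4 vol_gt0 vol_le; have n_ge1 : (1 <= n)%N by apply: leq_trans n_ge4.
have n_pos : 0 < n%:R :> real by rewrite ltr0n.
have b_gt0 : 0 < b by rewrite -(pmulr_lgt0 _ n_pos) (lt_le_trans vol_gt0).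
apply: le_trans (merge_RT_halt_le Sig n_ge1 vol_gt0) _; rewrite lee_fin.
have ln_ge1 := ln_nat_ge1 real n_ge4; set L := ln _ in ln_ge1 *.
have level_le : level_weight n (vol n) n <= 2 * b * (1 + L).
  apply: le_trans (level_weight_le_harmonic n vol_gt0) _.
  have vol_n : vol n / n%:R <= b by rewrite ler_pdivrMr ?ltr0n.
  have := ler_pM (divr_ge0 (ltW vol_gt0) (ler0n _ _)) (harmonic_sum_ge0 _ _) vol_n
    (harmonic_sum_le_ln real n_ge1).
  by rewrite -/L; lra.
have card_ge0 : 0 <= #|Sig|%:R :> real by apply: ler0n.
have : 0 <= #|Sig|%:R * b * (L - 1) by rewrite !mulr_ge0 ?(ltW b_gt0) // subr_ge0.
by have := ler_wpM2l card_ge0 level_le; lra.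
Qed.

End MergeHaltingTime.

Theorem theorem5p23 (Sig : finType) (psi : {ffun Sig -> nat} -> bool) :
  detection psi ->
  exists (S : finType) (Rs : seq (rxn S)) (iota : Sig -> S) (F : S) (Y0 Y1 : {set S}),
    wf_CRN Rs /\ injective iota /\ (forall s, iota s != F) /\ [disjoint Y0 & Y1] /\
    haltingly_decides Rs iota F Y0 Y1 psi /\
    halts_with_only_voters Rs iota F Y0 Y1 /\
        (forall vol : nat -> real, volume_Theta_n vol ->
           exists (C : real) (N : nat), forall n : nat, (N <= n)%N ->
             (RT_halt Rs iota F vol n <= (C * ln (n%:R : real))%:E)%E).
Proof.
move=> psi_detection.
exists {set Sig}, (merge_crn Sig), (@input_species Sig), (fuel Sig).
exists (no_voters psi), (yes_voters psi).
split; first exact: merge_crn_wf.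
split; first by move=> s1 s2 /set1_inj.
split; first by move=> s; apply/finset.set0Pn; exists s; rewrite finset.set11.
split; first by rewrite finset.disjoints_subset /no_voters subxx.
split; first exact: merge_crn_decides.
split; first by move=> c0 cs als _ _ _ K _; rewrite finset.in_setU finset.in_setC orNb.
move=> vol [a [b [a_gt0 [_ vol_bounds]]]].
exists (4 * #|Sig|%:R * b + 1)%R, 4%N => n n_ge4.
have n_ge1 : (1 <= n)%N by apply: leq_trans n_ge4.
have /andP[vol_lo vol_hi] := vol_bounds n n_ge1.
apply: merge_RT_halt_le_ln => //.
by apply: lt_le_trans vol_lo; rewrite mulr_gt0 // ltr0n.
Qed.
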